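(* The assignment $(G,H)\mapsto\mathcal A_{lc}(G,H)$ is a functor from $(\text{Graphs})\times(\text{Graphs})$ to $\mathbb C$-algebras which is covariant in the first factor and contravariant in the second, where morphisms of graphs are the usual graph homomorphisms.
   Context: Graphs are finite with symmetric edge sets; write $v\sim w$ for adjacency; a graph homomorphism $\phi:G\to H$ is a map $V(G)\to V(H)$ with $v\sim w\Rightarrow\phi(v)\sim\phi(w)$. For graphs $G,H$, $\mathcal A_{lc}(G,H)$ is the unital complex algebra generated by $e_{v,x}$ ($v\in V(G)$, $x\in V(H)$) with relations: $\sum_{x}e_{v,x}=1$; $e_{v,x}^2=e_{v,x}$; $e_{v,x}e_{v,y}=0$ for $x\ne y$; $e_{v,x}e_{w,y}=0$ if $v\sim w$ and $x\not\sim y$; $e_{v,x}e_{w,y}=e_{w,y}e_{v,x}$ if $v\sim w$. *)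

From HB Require Import structures.
From mathcomp Require Import all_boot all_algebra.
From mathcomp Require Import boolp Rstruct complex.
Set Implicit Arguments. Unset Strict Implicit. Unset Printing Implicit Defensive.
Import GRing.Theory.
Local Open Scope ring_scope.
Local Open Scope quotient_scope.

Notation C := (Rdefinitions.R[i]).

(** Finite graphs with symmetric adjacency relation (loops allowed). *)
Record graph := Graph { gV :> finType; adj : rel gV; adj_sym : symmetric adj }.
Arguments adj {g}.

Definition is_graph_hom (G H : graph) (f : G -> H) : Prop :=
  forall v w : G, adj v w -> adj (f v) (f w).

Definition ghom (G H : graph) := {f : G -> H | is_graph_hom f}.
Definition ghom_fun G H (f : ghom G H) : G -> H := proj1_sig f.
Coercion ghom_fun : ghom >-> Funclass.
Definition ghom_id (G : graph) : ghom G G := exist (@is_graph_hom G G) id (fun v w h => h).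
Definition ghom_comp (G1 G2 G3 : graph) (g : ghom G2 G3) (f : ghom G1 G2) : ghom G1 G3 :=
  exist (@is_graph_hom G1 G3) (g \o f) (fun v w h => proj2_sig g _ _ (proj2_sig f _ _ h)).

(** A_lc(G,H): the universal unital complex algebra on generators e_{v,x},
    built as the quotient of the type of formal algebra expressions
    ([term]) by the least congruence [eqv] containing the unital associative
    C-algebra axioms and the defining relations of A_lc(G,H). *)
Section Alc.
Variables (G H : graph).

Inductive term : Type :=
| tC of C
| tgen of G & H
| tadd of term & term
| tmul of term & term.

Definition tsum (s : seq term) := foldr tadd (tC 0) s.

Inductive eqv : term -> term -> Prop :=
| eqv_refl t : eqv t t
| eqv_sym s t : eqv s t -> eqv t s
| eqv_trans s t u : eqv s t -> eqv t u -> eqv s u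
| eqv_add s s' t t' : eqv s s' -> eqv t t' -> eqv (tadd s t) (tadd s' t')
| eqv_mul s s' t t' : eqv s s' -> eqv t t' -> eqv (tmul s t) (tmul s' t')
| eqv_Cadd a b : eqv (tC (a + b)) (tadd (tC a) (tC b))
| eqv_Cmul a b : eqv (tC (a * b)) (tmul (tC a) (tC b))
| eqv_addA s t u : eqv (tadd s (tadd t u)) (tadd (tadd s t) u)
| eqv_addC s t : eqv (tadd s t) (tadd t s)
| eqv_add0 t : eqv (tadd (tC 0) t) t
| eqv_addN t : eqv (tadd (tmul (tC (-1)) t) t) (tC 0)
| eqv_mulA s t u : eqv (tmul s (tmul t u)) (tmul (tmul s t) u)
| eqv_mul1l t : eqv (tmul (tC 1) t) t
| eqv_mul1r t : eqv (tmul t (tC 1)) t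
| eqv_mulDl s t u : eqv (tmul (tadd s t) u) (tadd (tmul s u) (tmul t u))
| eqv_mulDr s t u : eqv (tmul s (tadd t u)) (tadd (tmul s t) (tmul s u))
| eqv_central a t : eqv (tmul (tC a) t) (tmul t (tC a))
| eqv_sum1 (v : G) : eqv (tsum [seq tgen v x | x <- enum H]) (tC 1)
| eqv_idem (v : G) (x : H) : eqv (tmul (tgen v x) (tgen v x)) (tgen v x)
| eqv_orth (v : G) (x y : H) : x != y -> eqv (tmul (tgen v x) (tgen v y)) (tC 0)
| eqv_adj (v w : G) (x y : H) : adj v w -> ~~ adj x y ->
    eqv (tmul (tgen v x) (tgen w y)) (tC 0)
| eqv_comm (v w : G) (x y : H) : adj v w ->
    eqv (tmul (tgen v x) (tgen w y)) (tmul (tgen w y) (tgen v x)).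

HB.instance Definition _ := gen_eqMixin term.
HB.instance Definition _ := gen_choiceMixin term.

Definition eqvb (s t : term) : bool := `[< eqv s t >].

Lemma eqvb_refl : reflexive eqvb.
Proof. by move=> t; apply/asboolP; apply: eqv_refl. Qed.
Lemma eqvb_sym : symmetric eqvb.
Proof.
by move=> s t; apply/asboolP/asboolP; apply: eqv_sym.
Qed.
Lemma eqvb_trans : transitive eqvb.
Proof.
move=> t s u /asboolP h1 /asboolP h2; apply/asboolP; exact: eqv_trans h1 h2.
Qed.

Canonical eqv_equiv := EquivRel eqvb eqvb_refl eqvb_sym eqvb_trans.

Definition Alc_ := {eq_quot eqvb}.
Definition Alc : Type := Alc_.
HB.instance Definition _ := Choice.on Alc.

Local Notation pi := (\pi_Alc_ : term -> Alc).
Local Notation rep := (@repr _ Alc_ : Alc -> term).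

Lemma pi_eq s t : eqv s t -> pi s = pi t.
Proof. by move=> h; apply/eqquotP; apply/asboolP. Qed.
Lemma rep_eqv s : eqv (rep (pi s)) s.
Proof.
have /eqquotP /asboolP := reprK (pi s).
by [].
Qed.
Lemma piK (q : Alc) : pi (rep q) = q.
Proof. exact: reprK. Qed.

Definition zeroA : Alc := pi (tC 0).
Definition oneA : Alc := pi (tC 1).
Definition addA (p q : Alc) : Alc := locked (pi (tadd (rep p) (rep q))).
Definition mulA (p q : Alc) : Alc := locked (pi (tmul (rep p) (rep q))).
Definition scaleA (a : C) (q : Alc) : Alc := locked (pi (tmul (tC a) (rep q))).
Definition oppA (q : Alc) : Alc := locked (pi (tmul (tC (-1)) (rep q))).
Definition genA (v : G) (x : H) : Alc := pi (tgen v x).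

Lemma addE s t : addA (pi s) (pi t) = pi (tadd s t).
Proof. rewrite /addA -lock. by apply: pi_eq; apply: eqv_add; apply: rep_eqv. Qed.
Lemma mulE s t : mulA (pi s) (pi t) = pi (tmul s t).
Proof. rewrite /mulA -lock. by apply: pi_eq; apply: eqv_mul; apply: rep_eqv. Qed.
Lemma scaleE a t : scaleA a (pi t) = pi (tmul (tC a) t).
Proof. rewrite /scaleA -lock. by apply: pi_eq; apply: eqv_mul; [apply: eqv_refl|apply: rep_eqv]. Qed.

Lemma oppE t : oppA (pi t) = pi (tmul (tC (-1)) t).
Proof. rewrite /oppA -lock. by apply: pi_eq; apply: eqv_mul; [apply: eqv_refl|apply: rep_eqv]. Qed.

Ltac qelim := repeat (let q := fresh "q" in move=> q; rewrite -[q]piK);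
  rewrite /zeroA /oneA; rewrite ?oppE ?addE ?mulE ?scaleE ?addE ?mulE ?scaleE ?addE ?mulE ?scaleE;
  apply: pi_eq.

Lemma addA_assoc : associative addA.
Proof. qelim; exact: eqv_addA. Qed.
Lemma addA_comm : commutative addA.
Proof. qelim; exact: eqv_addC. Qed.
Lemma add0A : left_id zeroA addA.
Proof. qelim; exact: eqv_add0. Qed.
Lemma addNA : left_inverse zeroA oppA addA.
Proof. qelim; exact: eqv_addN. Qed.
Lemma mulA_assoc : associative mulA.
Proof. qelim; exact: eqv_mulA. Qed.
Lemma mul1A : left_id oneA mulA.
Proof. qelim; exact: eqv_mul1l. Qed.
Lemma mulA1 : right_id oneA mulA.
Proof. qelim; exact: eqv_mul1r. Qed.
Lemma mulADl : left_distributive mulA addA.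
Proof. qelim; exact: eqv_mulDl. Qed.
Lemma mulADr : right_distributive mulA addA.
Proof. qelim; exact: eqv_mulDr. Qed.

HB.instance Definition _ := GRing.isPzRing.Build Alc
  addA_assoc addA_comm add0A addNA mulA_assoc mul1A mulA1 mulADl mulADr.

Lemma scaleAA a b (q : Alc) : scaleA a (scaleA b q) = scaleA (a * b) q.
Proof.
rewrite -[q]piK !scaleE; apply: pi_eq; apply: eqv_trans (eqv_mulA _ _ _) _.
by apply: eqv_mul; [apply: eqv_sym; apply: eqv_Cmul | apply: eqv_refl].
Qed.
Lemma scale1A : left_id 1 scaleA.
Proof. qelim; exact: eqv_mul1l. Qed.
Lemma scaleADr : right_distributive scaleA (@GRing.add Alc).
Proof. move=> a p q; rewrite -[p]piK -[q]piK /GRing.add /= addE !scaleE addE; apply: pi_eq; exact: eqv_mulDr. Qed.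
Lemma scaleADl (q : Alc) : {morph scaleA^~ q : a b / a + b}.
Proof.
move=> a b /=; rewrite -[q]piK /GRing.add /= !scaleE addE; apply: pi_eq.
apply: eqv_trans (eqv_mulDl _ _ _).
by apply: eqv_mul; [apply: eqv_Cadd | apply: eqv_refl].
Qed.

HB.instance Definition _ := GRing.Zmodule_isLmodule.Build C Alc
  scaleAA scale1A scaleADr scaleADl.

Definition gen (v : G) (x : H) : Alc := pi (tgen v x).

Lemma scaleAl (a : C) (p q : Alc) : a *: (p * q) = (a *: p) * q.
Proof.
rewrite -[p]piK -[q]piK /GRing.scale /GRing.mul /= !mulE !scaleE mulE.
apply: pi_eq; exact: eqv_mulA.
Qed.
Lemma scaleAr (a : C) (p q : Alc) : a *: (p * q) = p * (a *: q).
Proof.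
rewrite -[p]piK -[q]piK /GRing.scale /GRing.mul /= !mulE !scaleE mulE.
apply: pi_eq; apply: eqv_trans (eqv_central _ _) _.
apply: eqv_trans (eqv_sym (eqv_mulA _ _ _)) _.
apply: eqv_mul; first exact: eqv_refl.
exact: eqv_sym (eqv_central _ _).
Qed.

Lemma gen_sum1 (v : G) : \sum_(x : H) gen v x = 1.
Proof.
rewrite /GRing.one /= /oneA -(pi_eq (eqv_sum1 v)).
rewrite -big_enum /=. elim: (enum H) => [|x s IH] /=; first by rewrite big_nil.
by rewrite big_cons IH /GRing.add /= addE.
Qed.
Lemma gen_idem (v : G) (x : H) : gen v x * gen v x = gen v x.
Proof. by rewrite /GRing.mul /= mulE; apply: pi_eq; apply: eqv_idem. Qed.
Lemma gen_orth (v : G) (x y : H) : x != y -> gen v x * gen v y = 0.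
Proof. by move=> h; rewrite /GRing.mul /= mulE; apply: pi_eq; apply: eqv_orth. Qed.
Lemma gen_adj (v w : G) (x y : H) : adj v w -> ~~ adj x y -> gen v x * gen w y = 0.
Proof.
by move=> h1 h2; rewrite /GRing.mul /= mulE; apply: pi_eq; apply: eqv_adj.
Qed.
Lemma gen_comm (v w : G) (x y : H) : adj v w -> gen v x * gen w y = gen w y * gen v x.
Proof.
by move=> h; rewrite /GRing.mul /= !mulE; apply: pi_eq; apply: eqv_comm.
Qed.

End Alc.

Arguments gen {G H}.

Definition is_Calg_hom (G1 H1 G2 H2 : graph) (f : Alc G1 H1 -> Alc G2 H2) : Prop :=
  [/\ forall p q, f (p + q) = f p + f q,
      forall (a : C) p, f (a *: p) = a *: f p,
      f 1 = 1 &
      forall p q, f (p * q) = f p * f q].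

From HB Require Import structures.
From mathcomp Require Import all_boot all_algebra.
From mathcomp Require Import boolp Rstruct complex.
Set Implicit Arguments. Unset Strict Implicit. Unset Printing Implicit Defensive.
Import GRing.Theory.
Local Open Scope ring_scope.
Local Open Scope quotient_scope.

(** A_lc(G,H) is presented by generators and relations, so any family of
    elements of a C-algebra satisfying the relations extends to an algebra map
    out of A_lc(G,H), and two algebra maps agreeing on generators are equal.
    For graph homomorphisms phi : G1 -> G2 and psi : H2 -> H1, the elements
    f_{v,x} := sum_{psi y = x} e_{phi v, y} of A_lc(G2,H2) satisfy the relations
    of A_lc(G1,H1): idempotence and orthogonality because the fibres of psi are
    disjoint, the sum relation because they partition H2, the commutation and
    vanishing relations because phi preserves adjacency and psi maps adjacent
    vertices to adjacent ones. Functoriality then follows from uniqueness, by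
    comparing both sides on generators. *)

Section UniversalProperty.
Variables (G H : graph) (A : pzRingType) (alg : {rmorphism C -> A}).
Hypothesis alg_central : forall (a : C) (p : A), alg a * p = p * alg a.

Definition Alc_relations (e : G -> H -> A) : Prop :=
  [/\ forall v, \sum_(x : H) e v x = 1,
      forall v x, e v x * e v x = e v x,
      forall v x y, x != y -> e v x * e v y = 0,
      forall v w x y, adj v w -> ~~ adj x y -> e v x * e w y = 0 &
      forall v w x y, adj v w -> e v x * e w y = e w y * e v x].

Variable e : G -> H -> A.
Hypothesis e_rel : Alc_relations e.

Fixpoint eval_term (t : term G H) : A :=
  match t with
  | tC a => alg a
  | tgen v x => e v x
  | tadd s t => eval_term s + eval_term t
  | tmul s t => eval_term s * eval_term t
  end.

Lemma eval_tsum (s : seq (term G H)) : eval_term (tsum s) = \sum_(t <- s) eval_term t.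
Proof.
elim: s => [|t s IHs] /=; first by rewrite big_nil rmorph0.
by rewrite big_cons IHs.
Qed.

Lemma eval_term_eqv s t : eqv s t -> eval_term s = eval_term t.
Proof.
case: e_rel => e_sum1 e_idem e_orth e_adj e_comm.
elim=> {s t} /=.
- by [].
- by move=> s t _ ->.
- by move=> s t u _ -> _ ->.
- by move=> s s' t t' _ -> _ ->.
- by move=> s s' t t' _ -> _ ->.
- by move=> a b; rewrite rmorphD.
- by move=> a b; rewrite rmorphM.
- by move=> s t u; rewrite addrA.
- by move=> s t; rewrite addrC.
- by move=> t; rewrite rmorph0 add0r.
- by move=> t; rewrite rmorphN1 mulN1r addNr rmorph0.
- by move=> s t u; rewrite mulrA.
- by move=> t; rewrite rmorph1 mul1r.
- by move=> t; rewrite rmorph1 mulr1.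
- by move=> s t u; rewrite mulrDl.
- by move=> s t u; rewrite mulrDr.
- by move=> a t; rewrite alg_central.
- by move=> v; rewrite eval_tsum big_map big_enum /= e_sum1 rmorph1.
- exact: e_idem.
- by move=> v x y /e_orth ->; rewrite rmorph0.
- by move=> v w x y hvw /(e_adj _ _ _ _ hvw) ->; rewrite rmorph0.
- exact: e_comm.
Qed.

Definition Alc_lift (p : Alc G H) : A := eval_term (repr p).

Lemma Alc_lift_pi t : Alc_lift (\pi_(Alc_ G H) t) = eval_term t.
Proof. exact: eval_term_eqv (rep_eqv t). Qed.

Lemma Alc_lift_gen v x : Alc_lift (gen v x) = e v x.
Proof. exact: Alc_lift_pi. Qed.

Lemma Alc_liftD p q : Alc_lift (p + q) = Alc_lift p + Alc_lift q.
Proof. by rewrite -[p]piK -[q]piK /GRing.add /= addE !Alc_lift_pi. Qed.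

Lemma Alc_liftM p q : Alc_lift (p * q) = Alc_lift p * Alc_lift q.
Proof. by rewrite -[p]piK -[q]piK /GRing.mul /= mulE !Alc_lift_pi. Qed.

Lemma Alc_lift1 : Alc_lift 1 = 1.
Proof. by rewrite /GRing.one /= /oneA Alc_lift_pi /= rmorph1. Qed.

Lemma Alc_liftZ a p : Alc_lift (a *: p) = alg a * Alc_lift p.
Proof. by rewrite -[p]piK /GRing.scale /= scaleE !Alc_lift_pi. Qed.

End UniversalProperty.

Section AlcScalar.
Variables G H : graph.

Definition Alc_scalar (a : C) : Alc G H := a *: (1 : Alc G H).

Lemma Alc_mul_scalar a (p : Alc G H) : Alc_scalar a * p = a *: p.
Proof. by rewrite -scaleAl mul1r. Qed.

Lemma Alc_scalar_central a (p : Alc G H) : Alc_scalar a * p = p * Alc_scalar a.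
Proof. by rewrite Alc_mul_scalar -scaleAr mulr1. Qed.

Fact Alc_scalar_is_zmod_morphism : zmod_morphism Alc_scalar.
Proof. by move=> a b; rewrite /Alc_scalar scalerBl. Qed.

Fact Alc_scalar_is_monoid_morphism : monoid_morphism Alc_scalar.
Proof.
split=> [|a b]; first by rewrite /Alc_scalar scale1r.
by rewrite Alc_mul_scalar /Alc_scalar scalerA.
Qed.

HB.instance Definition _ := GRing.isZmodMorphism.Build C (Alc G H) Alc_scalar
  Alc_scalar_is_zmod_morphism.
HB.instance Definition _ := GRing.isMonoidMorphism.Build C (Alc G H) Alc_scalar
  Alc_scalar_is_monoid_morphism.

Lemma pi_tC a : \pi_(Alc_ G H) (@tC G H a) = Alc_scalar a.
Proof.
rewrite /Alc_scalar /GRing.scale /GRing.one /= /oneA scaleE.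
by apply: pi_eq; apply: eqv_sym; apply: eqv_mul1r.
Qed.

End AlcScalar.

Section CalgHom.
Variables G1 H1 G2 H2 : graph.
Implicit Types f g : Alc G1 H1 -> Alc G2 H2.

Lemma Calg_hom_sum f : is_Calg_hom f ->
  forall (I : Type) (r : seq I) (P : pred I) (F : I -> Alc G1 H1),
  f (\sum_(i <- r | P i) F i) = \sum_(i <- r | P i) f (F i).
Proof.
case=> fD _ _ _ I r P F; apply: (big_morph f fD).
by apply: (addrI (f 0)); rewrite -fD !addr0.
Qed.

Lemma Calg_hom_eq_gen f g : is_Calg_hom f -> is_Calg_hom g ->
  (forall v x, f (gen v x) = g (gen v x)) -> f =1 g.
Proof.
case=> fD fZ f1 fM [gD gZ g1 gM] fg p; rewrite -[p]piK.
elim: (repr p) => [a|v x|s IHs t IHt|s IHs t IHt].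
- by rewrite pi_tC /Alc_scalar fZ gZ f1 g1.
- exact: fg.
- by rewrite -addE fD gD IHs IHt.
- by rewrite -mulE fM gM IHs IHt.
Qed.

Lemma Calg_hom_lift (e : G1 -> H1 -> Alc G2 H2) :
  Alc_relations e -> is_Calg_hom (Alc_lift (@Alc_scalar G2 H2) e).
Proof.
move=> e_rel; have central := @Alc_scalar_central G2 H2.
split=> [p q|a p||p q].
- exact: Alc_liftD.
- by rewrite Alc_liftZ // Alc_mul_scalar.
- exact: Alc_lift1.
- exact: Alc_liftM.
Qed.

End CalgHom.

Lemma Calg_hom_id (G H : graph) : is_Calg_hom (@id (Alc G H)).
Proof. by []. Qed.

Lemma Calg_hom_comp (G1 H1 G2 H2 G3 H3 : graph)
    (f : Alc G1 H1 -> Alc G2 H2) (g : Alc G2 H2 -> Alc G3 H3) :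
  is_Calg_hom f -> is_Calg_hom g -> is_Calg_hom (g \o f).
Proof.
case=> fD fZ f1 fM [gD gZ g1 gM].
by split=> [p q|a p||p q] /=; rewrite ?fD ?fZ ?f1 ?fM ?gD ?gZ ?g1 ?gM.
Qed.

Section AlcMap.
Variables (G1 G2 H1 H2 : graph) (phi : ghom G1 G2) (psi : ghom H2 H1).

Definition map_gen (v : G1) (x : H1) : Alc G2 H2 :=
  \sum_(y : H2 | psi y == x) gen (phi v) y.

Lemma map_gen_relations : Alc_relations map_gen.
Proof.
split=> [v|v x|v x x' neq_xx'|v w x x' adj_vw nadj_xx'|v w x x' adj_vw].
- by rewrite /map_gen -(gen_sum1 H2 (phi v)) (partition_big psi predT).
- rewrite /map_gen mulr_suml; apply: eq_bigr => y /eqP psi_y.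
  rewrite mulr_sumr (bigD1 y) /=; last by rewrite psi_y.
  rewrite gen_idem big1 ?addr0 // => z /andP [_ neq_zy].
  by apply: gen_orth; rewrite eq_sym.
- rewrite /map_gen mulr_suml big1 // => y /eqP psi_y.
  rewrite mulr_sumr big1 // => y' /eqP psi_y'; apply: gen_orth.
  by apply: contra neq_xx' => /eqP eq_yy'; rewrite -psi_y -psi_y' eq_yy'.
- rewrite /map_gen mulr_suml big1 // => y /eqP psi_y.
  rewrite mulr_sumr big1 // => y' /eqP psi_y'.
  apply: gen_adj; first exact: (proj2_sig phi).
  by apply: contra nadj_xx'; rewrite -psi_y -psi_y'; apply: (proj2_sig psi).
- rewrite /map_gen mulr_suml.
  under eq_bigr => y _ do rewrite mulr_sumr.
  rewrite exchange_big /= mulr_suml; apply: eq_bigr => y' _.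
  rewrite mulr_sumr; apply: eq_bigr => y _.
  by apply: gen_comm; apply: (proj2_sig phi).
Qed.

Definition Alc_map : Alc G1 H1 -> Alc G2 H2 := Alc_lift (@Alc_scalar G2 H2) map_gen.

Lemma Alc_map_hom : is_Calg_hom Alc_map.
Proof. exact: Calg_hom_lift map_gen_relations. Qed.

Lemma Alc_map_gen v x : Alc_map (gen v x) = map_gen v x.
Proof. apply: (Alc_lift_gen _ map_gen_relations); exact: Alc_scalar_central. Qed.

End AlcMap.

Lemma Alc_map_id (G H : graph) : Alc_map (ghom_id G) (ghom_id H) =1 id.
Proof.
apply: Calg_hom_eq_gen (Alc_map_hom _ _) (Calg_hom_id G H) _ => v x.
by rewrite Alc_map_gen /map_gen big_pred1_eq.
Qed.

Lemma Alc_map_comp (G1 G2 G3 H1 H2 H3 : graph)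
    (phi : ghom G1 G2) (phi' : ghom G2 G3) (psi : ghom H2 H1) (psi' : ghom H3 H2) :
  Alc_map (ghom_comp phi' phi) (ghom_comp psi psi') =1
  Alc_map phi' psi' \o Alc_map phi psi.
Proof.
apply: Calg_hom_eq_gen (Alc_map_hom _ _) _ _ => [|v x].
  exact: Calg_hom_comp (Alc_map_hom _ _) (Alc_map_hom _ _).
rewrite /= !Alc_map_gen /map_gen (Calg_hom_sum (Alc_map_hom _ _)).
rewrite (partition_big psi' (fun y => psi y == x)) //=.
apply: eq_bigr => y psi_y; rewrite Alc_map_gen /map_gen.
by apply: eq_bigl => z; case: (psi' z =P y) => [->|]; rewrite ?psi_y ?andbF.
Qed.

Theorem mainTheorem8 :
  exists F : forall (G1 G2 H1 H2 : graph), ghom G1 G2 -> ghom H2 H1 ->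
               Alc G1 H1 -> Alc G2 H2,
    [/\ (* each F phi psi is a unital C-algebra homomorphism acting on generators by
           e_{v,x} |-> sum_{y : psi y = x} e_{phi v, y} *)
        forall (G1 G2 H1 H2 : graph) (phi : ghom G1 G2) (psi : ghom H2 H1),
          is_Calg_hom (F G1 G2 H1 H2 phi psi) /\
          forall (v : G1) (x : H1),
            F G1 G2 H1 H2 phi psi (gen v x) = \sum_(y : H2 | psi y == x) gen (phi v) y,
        (* identities are preserved *)
        forall (G H : graph) (p : Alc G H),
          F G G H H (ghom_id G) (ghom_id H) p = p &
        (* composition is preserved (covariantly in G, contravariantly in H) *)
        forall (G1 G2 G3 H1 H2 H3 : graph)
               (phi : ghom G1 G2) (phi' : ghom G2 G3)
               (psi : ghom H2 H1) (psi' : ghom H3 H2) (p : Alc G1 H1),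
          F G1 G3 H1 H3 (ghom_comp phi' phi) (ghom_comp psi psi') p
          = F G2 G3 H2 H3 phi' psi' (F G1 G2 H1 H2 phi psi p)].
Proof.
exists Alc_map; split.
- by move=> G1 G2 H1 H2 phi psi; split; [exact: Alc_map_hom | exact: Alc_map_gen].
- exact: Alc_map_id.
- move=> G1 G2 G3 H1 H2 H3 phi phi' psi psi'; exact: Alc_map_comp.
Qed.
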